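(* Let $\mathcal H$ be a non-trivial basic hereditary $\mathcal L$-property and let $\mathcal M\in\mathcal H$ be countably infinite. Then for all sufficiently large $n$, the number of $\mathcal N\in\mathcal H_n$ that are compatible with $\mathcal M$ equals $|\Omega^{\mathcal M}([n])|/|\mathrm{Aut}^*(\mathcal M)|$.
   Context: $\mathcal L$ is a finite language of relation and/or constant symbols, of arity $r$ (largest arity of a relation symbol, $0$ if none). A hereditary $\mathcal L$-property is a class of $\mathcal L$-structures closed under isomorphism and substructures; $\mathcal H_n$ is the set of its members with universe $[n]$; it is non-trivial if $\mathcal H_n\neq\emptyset$ for infinitely many $n$. For an $\mathcal L$-structure and $a,b$ in it, $a\sim b$ iff the transposition of $a,b$ (fixing all other elements) is an automorphism; $\mathcal H$ is basic if the number of $\sim$-classes of its members is uniformly bounded. Since $\mathcal M$ has finitely many $\sim$-classes, enumerate them as $A_1,\dots,A_k$ with $|A_1|\le\dots\le|A_k|$; let $t$ be the number of finite classes (so $A_1,\dots,A_t$ are exactly the finite ones) and $K=\max\{r,|A_t|\}$ (with $K=r$ if $t=0$). For a set $X$, $\Omega^{\mathcal M}(X)$ is the set of ordered partitions $(X_1,\dots,X_k)$ of $X$ with $|X_i|=|A_i|$ for $i\le t$ and $|X_i|>K$ for $t<i\le k$. An $\mathcal L$-structure $\mathcal N$ is compatible with $\mathcal M$ if there is $(B_1,\dots,B_k)\in\Omega^{\mathcal M}(N)$ such that for every atomic formula $\tau(x_1,\dots,x_s)$ and all tuples $(b_1,\dots,b_s)$ of pairwise distinct elements of $N$ and $(a_1,\dots,a_s)$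 of pairwise distinct elements of $M$ with $b_j\in B_i\iff a_j\in A_i$ for all $i,j$, we have $\mathcal N\models\tau(\bar b)$ iff $\mathcal M\models\tau(\bar a)$. $\mathrm{Aut}^*(\mathcal M)$ is the set of permutations $\sigma$ of $[k]$ for which there is an automorphism $f$ of $\mathcal M$ with $f(A_i)=A_{\sigma(i)}$ for all $i\in[k]$. *)

From HB Require Import structures.
From mathcomp Require Import all_boot all_order all_algebra all_fingroup.
From Stdlib Require List.

Set Implicit Arguments.
Unset Strict Implicit.
Unset Printing Implicit Defensive.

Record lang := Lang {
  lrel : finType;
  lar : lrel -> nat;
  lcst : finType }.

Definition max_arity (L : lang) : nat := (\max_(R : lrel L) lar R)%N.

Record str (L : lang) (T : Type) := Str {
  srel : forall R : lrel L, ('I_(lar R) -> T) -> Prop;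
  scst : lcst L -> T }.

Definition iso (L : lang) (T1 T2 : Type) (M1 : str L T1) (M2 : str L T2)
  (f : T1 -> T2) : Prop :=
  bijective f /\
  (forall (R : lrel L) (t : 'I_(lar R) -> T1), srel M1 t <-> srel M2 (f \o t)) /\
  (forall c : lcst L, f (scst M1 c) = scst M2 c).

Definition automorphism (L : lang) (T : Type) (M : str L T) (f : T -> T) :=
  iso M M f.

Definition substr (L : lang) (T : Type) (M : str L T) (S : T -> Prop)
  (hS : forall c, S (scst M c)) : str L {x : T | S x} :=
  @Str L {x : T | S x}
    (fun R t => srel M (fun j => proj1_sig (t j)))
    (fun c => exist S (scst M c) (hS c)).

Definition Lclass (L : lang) := forall T : Type, str L T -> Prop.

Definition hereditary (L : lang) (H : Lclass L) : Prop :=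
  (forall (T1 T2 : Type) (M1 : str L T1) (M2 : str L T2) (f : T1 -> T2),
      iso M1 M2 f -> H T1 M1 -> H T2 M2) /\
  (forall (T : Type) (M : str L T) (S : T -> Prop)
          (hS : forall c, S (scst M c)),
      (exists x, S x) -> H T M -> H _ (substr hS)).

Definition nontrivial (L : lang) (H : Lclass L) : Prop :=
  forall m : nat, exists n : nat, (m <= n)%N /\ exists N : str L 'I_n, H _ N.

Definition sim (L : lang) (T : Type) (M : str L T) (a b : T) : Prop :=
  forall f : T -> T,
    f a = b -> f b = a -> (forall x, x <> a -> x <> b -> f x = x) ->
    automorphism M f.

Definition nclasses_le (L : lang) (T : Type) (M : str L T) (B : nat) : Prop :=
  exists s : seq T, (size s <= B)%N /\
    forall x, exists y, List.In y s /\ sim M x y.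

Definition basic (L : lang) (H : Lclass L) : Prop :=
  exists B : nat, forall (T : Type) (M : str L T), H T M -> nclasses_le M B.

Definition countably_infinite (T : Type) : Prop :=
  exists e : nat -> T, bijective e.

Definition class_card (T : Type) (k : nat) (cls : T -> 'I_k) (i : 'I_k)
  (m : nat) : Prop :=
  exists s : seq T, List.NoDup s /\ size s = m /\
    forall x, cls x = i <-> List.In x s.

(* cls : M -> 'I_k enumerates the ~-classes of M as A_1,...,A_k
   (A_{i+1} = cls^-1(i)), with A_1..A_t the finite classes, of sizes sz 0, ...,
   sz (t-1), in non-decreasing order, and the remaining classes infinite. *)
Definition class_enum (L : lang) (T : Type) (M : str L T) (k t : nat)
  (cls : T -> 'I_k) (sz : nat -> nat) : Prop :=
  (forall i : 'I_k, exists x, cls x = i) /\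
  (forall x y, cls x = cls y <-> sim M x y) /\
  (t <= k)%N /\
  (forall i : 'I_k, (i < t)%N -> class_card cls i (sz i)) /\
  (forall i : 'I_k, (t <= i)%N -> ~ exists m, class_card cls i m) /\
  (forall i j : 'I_k, (i <= j)%N -> (j < t)%N -> (sz i <= sz j)%N).

(* K = max {r, |A_t|} (K = r if t = 0). *)
Definition bigK (L : lang) (t : nat) (sz : nat -> nat) : nat :=
  maxn (max_arity L) (if t is t'.+1 then sz t' else 0%N).

(* Omega^M([n]): ordered partitions (X_1..X_k) of [n], encoded by the map
   p : [n] -> [k] sending x to the index of its block. *)
Definition in_Omega (L : lang) (k t : nat) (sz : nat -> nat) (n : nat)
  (p : {ffun 'I_n -> 'I_k}) : bool :=
  [forall i : 'I_k,
     if (i < t)%N then #|[set x | p x == i]| == sz i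
     else (bigK L t sz < #|[set x | p x == i]|)%N].

Inductive term (L : lang) (s : nat) :=
  | TVar of 'I_s
  | TCst of lcst L.

Inductive atomic (L : lang) (s : nat) :=
  | AEq of term L s & term L s
  | ARel (R : lrel L) of ('I_(lar R) -> term L s).

Definition eval_term (L : lang) (T : Type) (M : str L T) (s : nat)
  (a : 'I_s -> T) (u : term L s) : T :=
  match u with TVar j => a j | TCst c => scst M c end.

Definition holds (L : lang) (T : Type) (M : str L T) (s : nat)
  (a : 'I_s -> T) (phi : atomic L s) : Prop :=
  match phi with
  | AEq u v => eval_term M a u = eval_term M a v
  | ARel R us => srel M (fun j => eval_term M a (us j))
  end.

Definition compatible (L : lang) (T : Type) (M : str L T) (k t : nat)
  (cls : T -> 'I_k) (sz : nat -> nat) (n : nat) (N : str L 'I_n) : Prop :=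
  exists p : {ffun 'I_n -> 'I_k}, in_Omega L t sz p /\
    forall (s : nat) (phi : atomic L s) (b : 'I_s -> 'I_n) (a : 'I_s -> T),
      injective b -> injective a -> (forall j, p (b j) = cls (a j)) ->
      (holds N b phi <-> holds M a phi).

Definition in_AutStar (L : lang) (T : Type) (M : str L T) (k : nat)
  (cls : T -> 'I_k) (sigma : {perm 'I_k}) : Prop :=
  exists f : T -> T, automorphism M f /\
    forall i : 'I_k,
      (forall x, cls x = i -> cls (f x) = sigma i) /\
      (forall y, cls y = sigma i -> exists x, cls x = i /\ f x = y).

(* relations: set of tagged tuples; constants: their interpretations *)
Definition fstr (L : lang) (n : nat) : finType :=
  ({set {R : lrel L & {ffun 'I_(lar R) -> 'I_n}}} * {ffun lcst L -> 'I_n})%type.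

Definition fstr_str (L : lang) (n : nat) (N : fstr L n) : str L 'I_n :=
  @Str L 'I_n
    (fun R t => Tagged (fun R => {ffun 'I_(lar R) -> 'I_n}) (finfun t) \in N.1)
    (fun c => N.2 c).

Definition Pcard (F : finType) (P : F -> Prop) (m : nat) : Prop :=
  exists S : {set F}, (forall x, x \in S <-> P x) /\ #|S| = m.

From HB Require Import structures.
From mathcomp Require Import all_boot all_order all_algebra all_fingroup.
From mathcomp Require Import boolp.
From Stdlib Require List.

Set Implicit Arguments.
Unset Strict Implicit.
Unset Printing Implicit Defensive.

(* A transposition of two ~-equivalent elements is an automorphism, so the
   truth of an atomic formula in M at a tuple of distinct elements depends only
   on the classes of its entries.  Hence, for (X_1,...,X_k) in Omega^M([n]),
   mapping each X_i injectively into A_i and pulling M back gives the unique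
   structure compatible with M via this partition, and it lies in H because H is
   hereditary.  Two partitions give the same structure exactly when they differ
   by a relabelling in Aut^*(M): the ~-classes of the pulled-back structure are
   the blocks (|X_i| > K leaves room to realize inside the blocks every pattern
   an atomic formula can see), and a relabelling preserving the pulled-back
   structure lifts, class by class, to an automorphism of M.  As Aut^*(M) acts
   freely on Omega^M([n]), |Omega^M([n])| = cnt * |Aut^*(M)|. *)

Lemma In_mem (X : eqType) (s : seq X) x : List.In x s <-> x \in s.
Proof.
elim: s => //= y s IH; rewrite in_cons; split.
- by case=> [->|/IH ->]; rewrite ?eqxx ?orbT.
- by case/orP=> [/eqP ->|/IH]; [left|right].
Qed.

Lemma NoDup_uniq (X : eqType) (s : seq X) : List.NoDup s <-> uniq s.
Proof.
elim: s => [|x s IH] /=; first by split=> // _; constructor.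
rewrite List.NoDup_cons_iff IH In_mem.
by split=> [[/negP -> ->]|/andP [/negP hx hs]].
Qed.

Definition swap (X : eqType) (a b z : X) : X :=
  if z == a then b else if z == b then a else z.

Section Swap.
Variables (X : eqType) (a b : X).

Lemma swap_l : swap a b a = b.
Proof. by rewrite /swap eqxx. Qed.

Lemma swap_r : swap a b b = a.
Proof. by rewrite /swap eqxx; case: eqVneq => // ->. Qed.

Lemma swap_id z : z <> a -> z <> b -> swap a b z = z.
Proof. by move=> /eqP za /eqP zb; rewrite /swap (negPf za) (negPf zb). Qed.

Lemma swapK : involutive (swap a b).
Proof.
move=> z; case: (eqVneq z a) => [->|/eqP za]; first by rewrite swap_l swap_r.
case: (eqVneq z b) => [->|/eqP zb]; first by rewrite swap_r swap_l.
by rewrite !swap_id.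
Qed.

Lemma swap_inj : injective (swap a b).
Proof. exact: inv_inj swapK. Qed.

End Swap.

Lemma card_set_count (F : finType) (P : pred F) :
  #|[set x | P x]| = count P (enum F).
Proof. by rewrite cardsE /= -sum1_card -sum1_count big_enum_cond. Qed.

Lemma injective_factorization (X : eqType) r (w : 'I_r -> X) (ex : seq X) :
  exists s (a : 'I_s -> X) (idx : 'I_r -> 'I_s),
    [/\ injective a, w =1 a \o idx, forall z, z \in ex -> exists j, a j = z &
        forall P : pred X,
          #|[set j | P (a j)]| <= count P ex + #|[set j | P (w j)]|].
Proof.
pose l := undup (ex ++ map w (enum 'I_r)).
pose a (j : 'I_(size l)) := tnth (in_tuple l) j.
have mem_l z : z \in l -> exists j, a j = z.
  move=> zl; have hz : index z l < size l by rewrite index_mem.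
  by exists (Ordinal hz); rewrite /a (tnth_nth z) nth_index.
have wl j : w j \in l.
  by rewrite mem_undup mem_cat map_f ?mem_enum ?orbT.
pose idx j := Ordinal (etrans (index_mem (w j) l) (wl j)).
exists (size l), a, idx; split.
- move=> x y; pose z0 := a x; rewrite /a !(tnth_nth z0) => e.
  by apply/val_inj/eqP; rewrite -(nth_uniq z0 (ltn_ord x) (ltn_ord y) (undup_uniq _)) e.
- by move=> j; rewrite /a /= (tnth_nth (w j)) nth_index.
- by move=> z zex; apply: mem_l; rewrite mem_undup mem_cat zex.
- move=> P; rewrite !card_set_count -count_map /a map_tnth_enum.
  by apply: leq_trans (count_undup _ _) _; rewrite count_cat count_map.
Qed.

Section ExtendInjection.
Variables (n s k : nat) (c : 'I_s -> 'I_k) (q : 'I_n -> 'I_k).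
Hypothesis hcq : forall i, #|[set j | c j == i]| <= #|[set x | q x == i]|.

Lemma fresh_in_block (J : {set 'I_s}) (b0 : 'I_s -> 'I_n) j :
  j \notin J -> {in J, forall j', q (b0 j') = c j'} ->
  exists2 y, q y = c j & y \notin b0 @: J.
Proof.
move=> jJ hq; set C := [set j' | c j' == c j].
have used : #|b0 @: (J :&: C)| < #|[set x | q x == c j]|.
  apply: leq_ltn_trans (leq_imset_card _ _) (leq_trans _ (hcq (c j))).
  have sub : j |: (J :&: C) \subset C.
    by apply/subsetP => x; rewrite !inE => /orP [/eqP ->|/andP [_ ->]].
  by move/subset_leq_card: sub; rewrite cardsU1 inE (negPf jJ) add1n.
have /subsetPn [y] : ~~ ([set x | q x == c j] \subset b0 @: (J :&: C)).
  by apply: contraTN used => /subset_leq_card; rewrite leqNgt.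
rewrite inE => /eqP qy yU; exists y => //; apply: contra yU => /imsetP [j' j'J yE].
by apply/imsetP; exists j' => //; rewrite !inE j'J -qy yE hq ?eqxx.
Qed.

Lemma extend_injection (J : {set 'I_s}) (b0 : 'I_s -> 'I_n) :
  {in J &, injective b0} -> {in J, forall j, q (b0 j) = c j} ->
  exists b : 'I_s -> 'I_n,
    [/\ injective b, forall j, q (b j) = c j & {in J, b =1 b0}].
Proof.
move: {2}#|~: J| (erefl #|~: J|) => m; elim: m J b0 => [|m IH] J b0 hm b0i hq.
  have JT j : j \in J by have := card0_eq hm j; rewrite in_setC => /negbFE.
  by exists b0; split=> // [x y|j]; [apply: b0i; apply: JT | apply: hq].
have /card_gt0P [j] : 0 < #|~: J| by rewrite hm.
rewrite in_setC => jJ; have [y qy yJ] := fresh_in_block jJ hq.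
pose b1 j' := if j' == j then y else b0 j'.
have b1J : {in J, b1 =1 b0}.
  by move=> j' j'J; rewrite /b1; case: eqVneq j'J jJ => // -> ->.
have [|||b [bi bq bb1]] := IH (j |: J) b1.
- by move: hm; rewrite (cardsD1 j) inE jJ setCU setDE setIC => -[].
- move=> x1 x2; rewrite !inE => /orP [/eqP->|h1] /orP [/eqP->|h2] //.
  + by rewrite (b1J _ h2) /b1 eqxx => e; case/negP: yJ; rewrite e imset_f.
  + by rewrite (b1J _ h1) /b1 eqxx => e; case/negP: yJ; rewrite -e imset_f.
  + by rewrite !b1J //; apply: b0i.
- move=> j'; rewrite !inE => /orP [/eqP->|j'J]; first by rewrite /b1 eqxx.
  by rewrite b1J // hq.
by exists b; split=> // j' j'J; rewrite bb1 ?b1J // !inE j'J orbT.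
Qed.

End ExtendInjection.

Lemma increasing_enum (D : pred nat) : (forall m, exists d, (m <= d) && D d) ->
  exists en : nat -> nat,
    [/\ forall j, D (en j), injective en & forall d, D d -> exists j, en j = d].
Proof.
move=> hD; pose next m := ex_minn (hD m).
have nextP m : (m <= next m) && D (next m) by rewrite /next; case: ex_minnP.
have next_min m d : (m <= d) && D d -> next m <= d.
  by rewrite /next; case: ex_minnP => x _; apply.
pose fix en j := if j is j'.+1 then next (en j').+1 else next 0.
have enD j : D (en j).
  by case: j => [|j]; [case/andP: (nextP 0) | case/andP: (nextP (en j).+1)].
have en_lt j : en j < en j.+1 by case/andP: (nextP (en j).+1).
have en_mono : {homo en : i j / i < j} := homo_ltn ltn_trans en_lt.
exists en; split=> // [i j eij|d Dd].
  by apply/eqP; case: ltngtP => // /en_mono; rewrite eij ltnn.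
have ge_j j : j <= en j by elim: j => // j IH; apply: leq_ltn_trans IH (en_lt j).
have ex0 : exists j, en j <= d by exists 0; apply: next_min; rewrite Dd.
have [j enj jmax] := ex_maxnP ex0 (fun j => leq_trans (ge_j j)).
exists j; apply/eqP; rewrite eqn_leq enj leqNgt; apply/negP => lt_enj.
have /jmax : en j.+1 <= d by apply: next_min; rewrite lt_enj Dd.
by rewrite ltnn.
Qed.

Lemma relabel_perm n k (p q : 'I_n -> 'I_k) :
  (forall i, exists x, p x = i) ->
  (forall x y, (p x == p y) = (q x == q y)) ->
  exists sg : {perm 'I_k}, forall x, q x = sg (p x).
Proof.
move=> psurj hpq; pose w i := proj1_sig (cid (psurj i)).
have pw i : p (w i) = i by rewrite /w; case: cid.
have finj : injective (fun i => q (w i)).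
  by move=> i j /eqP; rewrite -hpq !pw => /eqP.
by exists (perm finj) => x; rewrite permE; apply/eqP; rewrite -hpq pw.
Qed.

Section Structures.
Variable L : lang.

Lemma iso_holds (T1 T2 : Type) (M1 : str L T1) (M2 : str L T2) f s
    (a : 'I_s -> T1) (phi : atomic L s) :
  iso M1 M2 f -> holds M2 (f \o a) phi <-> holds M1 a phi.
Proof.
move=> [[g fK _] [hrel hcst]].
have ev u : eval_term M2 (f \o a) u = f (eval_term M1 a u).
  by case: u => //= c; rewrite hcst.
case: phi => [u v|R us] /=; first by rewrite !ev; split=> [/(can_inj fK)|->].
by rewrite hrel; under [X in srel M2 X]funext => j do rewrite ev.
Qed.

Lemma swap_automorphism (X : eqType) (M : str L X) (a b : X) :
  (forall R (w : 'I_(lar R) -> X), srel M w -> srel M (swap a b \o w)) ->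
  (forall c, swap a b (scst M c) = scst M c) -> automorphism M (swap a b).
Proof.
move=> hrel hcst; split; first exact: (Bijective (swapK a b) (swapK a b)).
split=> // R w; split=> [|/hrel]; first exact: hrel.
by congr (srel M _); apply: funext => j /=; rewrite swapK.
Qed.

Definition rel_atom (R : lrel L) s (idx : 'I_(lar R) -> 'I_s) : atomic L s :=
  @ARel L s R (fun j => TVar L (idx j)).

End Structures.

(** * The ~-classes of M *)

Section Classes.
Variables (L : lang) (T : Type) (M : str L T) (k t : nat) (cls : T -> 'I_k)
  (sz : nat -> nat).
Hypothesis henum : class_enum M t cls sz.
Hypothesis hcount : countably_infinite T.

HB.instance Definition _ := gen_eqMixin T.

Local Notation K := (bigK L t sz).

Lemma cls_surj i : exists x, cls x = i.
Proof. by case: henum. Qed.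

Lemma cls_eq_sim x y : cls x = cls y <-> sim M x y.
Proof. by case: henum => _ []. Qed.

Lemma t_le_k : t <= k.
Proof. by case: henum => _ [_ []]. Qed.

Lemma finite_class (i : 'I_k) : i < t -> class_card cls i (sz i).
Proof. by case: henum => _ [_ [_ [h _]]]; apply: h. Qed.

Lemma infinite_class (i : 'I_k) : t <= i -> ~ exists m, class_card cls i m.
Proof. by case: henum => _ [_ [_ [_ [h _]]]]; apply: h. Qed.

Lemma sz_mono (i j : 'I_k) : i <= j -> j < t -> sz i <= sz j.
Proof. by case: henum => _ [_ [_ [_ [_ h]]]]; apply: h. Qed.

Lemma swap_cls_automorphism (a b : T) :
  cls a = cls b -> automorphism M (swap a b).
Proof. by move/cls_eq_sim; apply; [exact: swap_l | exact: swap_r | exact: swap_id]. Qed.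

Lemma cls_swap (a b z : T) : cls a = cls b -> cls (swap a b z) = cls z.
Proof.
move=> hab; case: (eqVneq z a) => [->|/eqP za]; first by rewrite swap_l.
by case: (eqVneq z b) => [->|/eqP zb]; rewrite ?swap_r ?swap_id.
Qed.

Lemma cls_cst_eq c z : cls z = cls (scst M c) -> z = scst M c.
Proof. by move/swap_cls_automorphism => [_ [_ /(_ c)]]; rewrite swap_r. Qed.

(* Transpositions inside classes carry a to a' one coordinate at a time. *)
Lemma holds_cls_pattern s (a a' : 'I_s -> T) (phi : atomic L s) :
  injective a -> injective a' -> (forall j, cls (a j) = cls (a' j)) ->
  holds M a phi <-> holds M a' phi.
Proof.
move=> + ia'; have [m] := ubnP #|[set j | a j != a' j]|.
elim: m a => // m IH a hm ia hc.
case: (boolP [exists j, a j != a' j]) => [/existsP [j hj]|/existsPn same].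
  pose tau := swap (a j) (a' j).
  rewrite -(iso_holds a phi (swap_cls_automorphism (hc j))) -/tau.
  apply: IH => [|x y /swap_inj /ia //|j']; last by rewrite /= cls_swap.
  apply: leq_ltn_trans (_ : #|[set j | a j != a' j] :\ j| < m); last first.
    by move: hm; rewrite (cardsD1 j) inE hj add1n ltnS.
  apply/subset_leq_card/subsetP => j'; rewrite !inE /= => hj'.
  have j'j : j' != j by apply: contraNneq hj' => ->; rewrite /tau swap_l eqxx.
  rewrite j'j; apply: contraNneq hj' => e.
  have ne1 : a' j' <> a j by rewrite -e => /ia /eqP; rewrite (negPf j'j).
  have ne2 : a' j' <> a' j by move=> /ia' /eqP; rewrite (negPf j'j).
  by rewrite /= /tau e swap_id.
suff -> : a = a' by [].
by apply: funext => j; apply/eqP/negPn/same.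
Qed.

Lemma class_card_uniq i m1 m2 :
  class_card cls i m1 -> class_card cls i m2 -> m1 = m2.
Proof.
move=> [s1 [n1 [<- h1]]] [s2 [n2 [<- h2]]].
apply/eqP; rewrite eqn_leq; apply/andP; split; apply/leP.
- by apply: List.NoDup_incl_length n1 _ => x /h1 /h2.
- by apply: List.NoDup_incl_length n2 _ => x /h2 /h1.
Qed.

Lemma sz_gt0 (i : 'I_k) : i < t -> 0 < sz i.
Proof.
move/finite_class=> [s [_ [<- hs]]]; have [x /hs] := cls_surj i.
by case: s {hs}.
Qed.

Lemma sz_le_K (i : 'I_k) : i < t -> sz i <= K.
Proof.
rewrite /bigK; case: t sz_mono t_le_k => // t' mono t'k it'.
exact: leq_trans (mono i (Ordinal t'k) it' (ltnSn _)) (leq_maxr _ _).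
Qed.

Lemma lar_le_K (R : lrel L) : lar R <= K.
Proof. by apply: leq_trans (leq_maxl _ _); rewrite /max_arity (leq_bigmax R). Qed.

Lemma finite_class_enum (i : 'I_k) : i < t ->
  exists e : 'I_(sz i) -> T, injective e /\ forall z, cls z = i <-> exists x, e x = z.
Proof.
move=> hi; have [l [/NoDup_uniq ul [<- hl]]] := finite_class hi.
have [z0 _] := cls_surj i.
exists (fun x : 'I_(size l) => nth z0 l x); split.
  by move=> x y e; apply/val_inj; apply: (elimT (uniqP z0) ul) e; apply: ltn_ord.
move=> z; rewrite hl In_mem; split=> [/(nthP z0) [x xl <-]|[x <-]].
  by exists (Ordinal xl).
exact: mem_nth.
Qed.

Lemma infinite_class_enum (i : 'I_k) : t <= i ->
  exists e : nat -> T, injective e /\ forall z, cls z = i <-> exists x, e x = z.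
Proof.
move=> hi; have [e0 [f0 e0K f0K]] := hcount.
have unbounded m : exists d, (m <= d) && (cls (e0 d) == i).
  apply: contrapT => hne; apply: (infinite_class hi).
  pose l := [seq z <- map e0 (iota 0 m) | cls z == i].
  exists (size l), l; split; last split=> // z.
    apply/NoDup_uniq; rewrite filter_uniq // map_inj_uniq ?iota_uniq //.
    exact: can_inj e0K.
  rewrite In_mem mem_filter; split=> [zi|/andP [/eqP //]].
  rewrite zi eqxx -(f0K z) map_f // mem_iota add0n ltnNge.
  by apply/negP=> mz; apply: hne; exists (f0 z); rewrite mz f0K zi eqxx.
have [en [enD en_inj en_surj]] := increasing_enum unbounded.
exists (e0 \o en); split=> [x y /(can_inj e0K) /en_inj //|z].
split=> [zi|[x <-]]; last exact/eqP/enD.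
have [x enx] : exists x, en x = f0 z by apply: en_surj; rewrite f0K zi eqxx.
by exists x; rewrite /= enx f0K.
Qed.

Lemma class_seq (i : 'I_k) m : (i < t -> m <= sz i) ->
  exists l : seq T, [/\ uniq l, forall z, z \in l -> cls z = i & m <= size l].
Proof.
case: (ltnP i t) => [hi /(_ isT) le_m|hi _].
  have [l [/NoDup_uniq ul [szl hl]]] := finite_class hi.
  by exists l; split=> [||]; rewrite ?szl // => z /In_mem /hl.
have [e [e_inj he]] := infinite_class_enum hi.
exists (map e (iota 0 m)); split; rewrite ?size_map ?size_iota //.
- by rewrite map_inj_uniq ?iota_uniq.
- by move=> z /mapP [x _ ->]; apply/he; exists x.
Qed.

Lemma class_bij_of_enum (D : Type) (i j : 'I_k) (ei ej : D -> T) :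
  injective ei -> injective ej ->
  (forall z, cls z = i <-> exists x, ei x = z) ->
  (forall z, cls z = j <-> exists x, ej x = z) ->
  exists h : T -> T,
    [/\ forall z, cls z = i -> cls (h z) = j,
        forall z z', cls z = i -> cls z' = i -> h z = h z' -> z = z' &
        forall y, cls y = j -> exists2 z, cls z = i & h z = y].
Proof.
move=> ei_inj ej_inj hi hj.
have [z0 /hi [x0 _]] := cls_surj i.
have inv z : exists x, cls z = i -> ei x = z.
  by case: (pselect (cls z = i)) => [/hi [x <-]|]; [exists x | exists x0].
pose ei' z := proj1_sig (cid (inv z)).
have ei'K z : cls z = i -> ei (ei' z) = z by rewrite /ei'; case: cid.
exists (ej \o ei'); split=> [z _|z z' zi z'i /ej_inj e|y /hj [x <-]].
- by apply/hj; exists (ei' z).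
- by rewrite -(ei'K z zi) -(ei'K z' z'i) e.
have eix : cls (ei x) = i by apply/hi; exists x.
by exists (ei x) => //=; congr ej; apply: ei_inj; rewrite ei'K.
Qed.

Lemma class_bij (i j : 'I_k) : (j < t) = (i < t) -> (i < t -> sz j = sz i) ->
  exists h : T -> T,
    [/\ forall z, cls z = i -> cls (h z) = j,
        forall z z', cls z = i -> cls z' = i -> h z = h z' -> z = z' &
        forall y, cls y = j -> exists2 z, cls z = i & h z = y].
Proof.
move=> ji szj; case: (ltnP i t) => hi.
  have [ei [ei_inj hei]] := finite_class_enum hi.
  have [ej [ej_inj hej]] := finite_class_enum (etrans ji hi).
  move: ej ej_inj hej; rewrite szj // => ej ej_inj hej.
  exact: class_bij_of_enum ei_inj ej_inj hei hej.
have [ei [ei_inj hei]] := infinite_class_enum hi.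
have hj : t <= j by rewrite leqNgt ji -leqNgt.
have [ej [ej_inj hej]] := infinite_class_enum hj.
exact: class_bij_of_enum ei_inj ej_inj hei hej.
Qed.

Lemma class_card_transfer (f : T -> T) i j m : injective f ->
  (forall x, cls x = i -> cls (f x) = j) ->
  (forall y, cls y = j -> exists x, cls x = i /\ f x = y) ->
  class_card cls i m -> class_card cls j m.
Proof.
move=> f_inj fij fsurj [s [/NoDup_uniq us [<- hs]]].
exists (map f s); split; first by apply/NoDup_uniq; rewrite map_inj_uniq.
split=> [|y]; first by rewrite size_map.
rewrite In_mem; split=> [/fsurj [x [/hs /In_mem xs <-]]|/mapP [x /In_mem /hs xi ->]].
  exact: map_f.
exact: fij.
Qed.

Lemma autstar_class_card sg i m : in_AutStar M cls sg ->
  class_card cls (sg i) m <-> class_card cls i m.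
Proof.
case=> f [[[g fK gK] _] hf]; have [fi fsurj] := hf i.
split; last exact: class_card_transfer (can_inj fK) fi fsurj.
apply: class_card_transfer (can_inj gK) _ _ => [y /fsurj [x [xi <-]]|x xi].
  by rewrite fK.
by exists (f x); rewrite fK fi.
Qed.

Lemma autstar_finite sg i : in_AutStar M cls sg -> (sg i < t) = (i < t).
Proof.
move=> hsg; case: (ltnP i t) => hi; case: (ltnP (sg i) t) => // hs.
  case: (infinite_class hs); exists (sz i).
  exact/(autstar_class_card _ _ hsg)/finite_class.
case: (infinite_class hi); exists (sz (sg i)).
exact/(autstar_class_card _ _ hsg)/finite_class.
Qed.

Lemma autstar_sz sg (i : 'I_k) : in_AutStar M cls sg -> i < t -> sz (sg i) = sz i.
Proof.
move=> hsg hi; have hs : sg i < t by rewrite (autstar_finite _ hsg).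
apply: (class_card_uniq (finite_class hs)).
exact/(autstar_class_card _ _ hsg)/finite_class.
Qed.

Lemma perm_lift (sg : {perm 'I_k}) :
  (forall i, (sg i < t) = (i < t)) -> (forall i : 'I_k, i < t -> sz (sg i) = sz i) ->
  exists F : T -> T, bijective F /\ forall z, cls (F z) = sg (cls z).
Proof.
move=> sg_fin sg_sz; pose hP i := class_bij (sg_fin i) (@sg_sz i).
pose F z := proj1_sig (cid (hP (cls z))) z.
have hF i := proj2_sig (cid (hP i)).
have clsF z : cls (F z) = sg (cls z) by have [h _ _] := hF (cls z); apply: h.
have F_inj : injective F.
  move=> z z' e; have ec : cls z' = cls z by apply: (@perm_inj _ sg); rewrite -!clsF e.
  by move: e; rewrite /F ec; have [_ h _] := hF (cls z); apply: h.
have F_surj y : exists z, F z = y.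
  have [_ _ h] := hF ((sg^-1)%g (cls y)).
  have [z zi <-] := h y (esym (permKV sg (cls y))).
  by exists z; rewrite /F zi.
pose G y := proj1_sig (cid (F_surj y)).
have GK : cancel G F by move=> y; rewrite /G; case: cid.
by exists F; split=> //; exists G => // z; apply: F_inj; rewrite GK.
Qed.

Lemma autstar_of_lift (sg : {perm 'I_k}) F : automorphism M F ->
  (forall z, cls (F z) = sg (cls z)) -> in_AutStar M cls sg.
Proof.
move=> Faut FP; exists F; split=> // i; split=> [x <-|y yi] //.
have [[G FK GK] _] := Faut.
by exists (G y); split=> //; apply: (@perm_inj _ sg); rewrite -FP GK yi.
Qed.

Definition autstar_set : {set {perm 'I_k}} :=
  [set sg | `[< in_AutStar M cls sg >] ].

Lemma autstar_set_gt0 : 0 < #|autstar_set|.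
Proof.
apply/card_gt0P; exists 1%g; rewrite inE; apply/asboolP; exists id.
split; first by split; [exists id | split].
by move=> i; split=> [x ->|y yi]; [rewrite perm1 | exists y; rewrite yi perm1].
Qed.

(** * Pulling M back along an ordered partition *)

Variable n : nat.
Hypothesis n_gt0 : 0 < n.

Local Notation Omega := (in_Omega L t sz).
Implicit Types p q : {ffun 'I_n -> 'I_k}.

Let x0 : 'I_n := Ordinal n_gt0.

Lemma card_block_fin p (i : 'I_k) :
  Omega p -> i < t -> #|[set x | p x == i]| = sz i.
Proof. by move=> /forallP /(_ i) + hi; rewrite hi => /eqP. Qed.

Lemma card_block_inf p (i : 'I_k) :
  Omega p -> t <= i -> K < #|[set x | p x == i]|.
Proof. by move=> /forallP /(_ i) + hi; rewrite ltnNge hi. Qed.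

Lemma block_nonempty p i : Omega p -> exists x, p x = i.
Proof.
move=> hp; have /card_gt0P [x] : 0 < #|[set x | p x == i]|.
  case: (ltnP i t) => hi; first by rewrite card_block_fin ?sz_gt0.
  exact: leq_ltn_trans (leq0n K) (card_block_inf hp hi).
by rewrite inE => /eqP; exists x.
Qed.

(* The x-th element of block i goes to the x-th element of a long enough list
   of distinct elements of A_i. *)
Lemma embedding_exists p : exists e : 'I_n -> T,
  Omega p -> injective e /\ forall x, cls (e x) = p x.
Proof.
have [z0 _] := cls_surj (p x0).
case: (boolP (Omega p)) => hp; last by exists (fun=> z0).
have hl i : exists l : seq T, [/\ uniq l, forall z, z \in l -> cls z = i &
                                   #|[set x | p x == i]| <= size l].
  by apply: class_seq => hi; rewrite card_block_fin.
pose l i := proj1_sig (cid (hl i)); have lP i := proj2_sig (cid (hl i)).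
pose B x := enum [set y | p y == p x].
have xB x : x \in B x by rewrite mem_enum inE.
have rk_lt x : index x (B x) < size (l (p x)).
  by have [_ _] := lP (p x); apply: leq_trans; rewrite cardE index_mem.
have cls_e x : cls (nth z0 (l (p x)) (index x (B x))) = p x.
  by have [_ + _] := lP (p x); apply; apply: mem_nth.
exists (fun x => nth z0 (l (p x)) (index x (B x))) => _; split=> // x y e.
have pxy : p x = p y by rewrite -(cls_e x) -(cls_e y) e.
have Bxy : B x = B y by rewrite /B pxy.
have [ul _ _] := lP (p y); move: e (rk_lt x); rewrite pxy Bxy => e rkx.
move/eqP: e; rewrite (nth_uniq _ rkx (rk_lt y) ul) => /eqP e.
by rewrite -(nth_index x (xB x)) Bxy e nth_index.
Qed.

Definition emb p : 'I_n -> T := proj1_sig (cid (embedding_exists p)).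

Lemma emb_inj p : Omega p -> injective (emb p).
Proof. by move=> hp; case: (proj2_sig (cid (embedding_exists p)) hp). Qed.

Lemma emb_cls p x : Omega p -> cls (emb p x) = p x.
Proof. by move=> hp; case: (proj2_sig (cid (embedding_exists p)) hp) => _; apply. Qed.

Definition pb_cst p (c : lcst L) : 'I_n :=
  odflt x0 [pick x | emb p x == scst M c].

Lemma emb_pb_cst p c : Omega p -> emb p (pb_cst p c) = scst M c.
Proof.
move=> hp; have [x px] := block_nonempty (cls (scst M c)) hp.
rewrite /pb_cst; case: pickP => [y /eqP //|/(_ x)].
by rewrite (cls_cst_eq (etrans (emb_cls x hp) px)) eqxx.
Qed.

Definition pullback p : fstr L n :=
  ([set u : {R : lrel L & {ffun 'I_(lar R) -> 'I_n}} |
     `[< srel M (fun j => emb p (tagged u j)) >] ],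
   [ffun c => pb_cst p c]).

Local Notation str_pb p := (fstr_str (pullback p)).

Lemma pullback_srel p (R : lrel L) (w : 'I_(lar R) -> 'I_n) :
  srel (str_pb p) w <-> srel M (emb p \o w).
Proof.
rewrite /= inE; apply: (iff_trans (iff_sym (rwP (asboolP _)))).
by under [X in srel M X]funext => j do rewrite /= ffunE; exact: iff_refl.
Qed.

Lemma pullback_cst p c : scst (str_pb p) c = pb_cst p c.
Proof. by rewrite /= ffunE. Qed.

Lemma pullback_holds p s (b : 'I_s -> 'I_n) (phi : atomic L s) : Omega p ->
  holds (str_pb p) b phi <-> holds M (emb p \o b) phi.
Proof.
move=> hp; have ev u : emb p (eval_term (str_pb p) b u) = eval_term M (emb p \o b) u.
  by case: u => //= c; rewrite ffunE emb_pb_cst.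
case: phi => [u v|R us]; first by rewrite /= -!ev; split=> [->|/(emb_inj hp)].
apply: (iff_trans (pullback_srel _ _)).
by under [X in srel M X]funext => j do rewrite /= ev; exact: iff_refl.
Qed.

Lemma pullback_holds_pattern p s (b : 'I_s -> 'I_n) (a : 'I_s -> T) phi :
  Omega p -> injective b -> injective a -> (forall j, p (b j) = cls (a j)) ->
  holds (str_pb p) b phi <-> holds M a phi.
Proof.
move=> hp b_inj a_inj hba; rewrite pullback_holds //.
apply: holds_cls_pattern => // [x y /emb_inj /b_inj|j]; first exact.
by rewrite /= emb_cls.
Qed.

Lemma pullback_compatible p : Omega p -> compatible M t cls sz (str_pb p).
Proof.
by move=> hp; exists p; split=> // s phi b a; apply: pullback_holds_pattern.
Qed.

Lemma compatible_pullback (N : fstr L n) p : Omega p ->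
  (forall s phi (b : 'I_s -> 'I_n) (a : 'I_s -> T), injective b -> injective a ->
     (forall j, p (b j) = cls (a j)) -> holds (fstr_str N) b phi <-> holds M a phi) ->
  N = pullback p.
Proof.
case: N => Nrel Ncst hp hN.
have hNp s phi (b : 'I_s -> 'I_n) : injective b ->
    holds (fstr_str (Nrel, Ncst)) b phi <-> holds (str_pb p) b phi.
  move=> b_inj; rewrite (hN s phi b (emb p \o b)) ?pullback_holds //.
  - by move=> x y /emb_inj /b_inj; apply.
  - by move=> j; rewrite /= emb_cls.
congr pair.
  apply/setP => -[R w].
  have [s [b [idx [b_inj wE _ _]]]] := injective_factorization (fun j => w j) [::].
  have bw : [ffun j => b (idx j)] = w by apply/ffunP => j; rewrite ffunE wE.
  have := hNp s (rel_atom idx) b b_inj; rewrite /= bw => hw.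
  by apply/idP/idP => /hw.
apply/ffunP => c; rewrite ffunE.
have i1 : injective (fun _ : 'I_1 => Ncst c) by move=> x y _; rewrite !ord1.
have i2 : injective (fun _ : 'I_1 => emb p (Ncst c)) by move=> x y _; rewrite !ord1.
have [+ _] := hN 1 (AEq (TVar L ord0) (TCst 1 c)) _ _ i1 i2 (fun=> esym (emb_cls _ hp)).
move=> /(_ erefl) /= e.
by apply: (emb_inj hp); rewrite e emb_pb_cst.
Qed.

Lemma realize_pattern p s (a : 'I_s -> T) (J : {set 'I_s}) (b0 : 'I_s -> 'I_n) :
  Omega p -> injective a ->
  (forall i : 'I_k, t <= i -> #|[set j | cls (a j) == i]| <= K.+1) ->
  {in J &, injective b0} -> {in J, forall j, p (b0 j) = cls (a j)} ->
  exists b, [/\ injective b, forall j, p (b j) = cls (a j) & {in J, b =1 b0}].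
Proof.
move=> hp a_inj small; apply: extend_injection => i.
case: (ltnP i t) => hi; last exact: leq_trans (small i hi) (card_block_inf hp hi).
rewrite card_block_fin //; have [l [nd [<- hl]]] := finite_class hi.
rewrite cardE -(size_map a); apply: uniq_leq_size => [|z /mapP [j]].
  by rewrite map_inj_uniq ?enum_uniq.
by rewrite mem_enum inE => /eqP ji ->; apply/In_mem/hl.
Qed.

Lemma emb_swap p (x y z : 'I_n) : Omega p ->
  emb p (swap x y z) = swap (emb p x) (emb p y) (emb p z).
Proof.
move=> hp; have ei := emb_inj hp.
case: (eqVneq z x) => [->|/eqP zx]; first by rewrite !swap_l.
case: (eqVneq z y) => [->|/eqP zy]; first by rewrite !swap_r.
have ex : emb p z <> emb p x by move/ei.
have ey : emb p z <> emb p y by move/ei.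
by rewrite !swap_id.
Qed.

Lemma pullback_swap p (x y : 'I_n) : Omega p -> p x = p y ->
  automorphism (str_pb p) (swap x y).
Proof.
move=> hp pxy; apply: swap_automorphism => [R w|c].
  have [_ [hrel _]] : automorphism M (swap (emb p x) (emb p y)).
    by apply: swap_cls_automorphism; rewrite !emb_cls.
  rewrite !pullback_srel.
  have -> : emb p \o (swap x y \o w) = swap (emb p x) (emb p y) \o (emb p \o w).
    by apply: funext => j; rewrite /= emb_swap.
  exact: (hrel R _).1.
rewrite pullback_cst.
have single z : p z = p (pb_cst p c) -> z = pb_cst p c.
  move=> pz; apply: (emb_inj hp); rewrite emb_pb_cst //; apply: cls_cst_eq.
  by rewrite emb_cls // pz -(emb_cls _ hp) emb_pb_cst.
case: (eqVneq (pb_cst p c) x) => [e|/eqP cx].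
  have -> : y = x by rewrite -e; apply: single; rewrite -pxy e.
  by rewrite e swap_l.
case: (eqVneq (pb_cst p c) y) => [e|/eqP cy]; last by rewrite swap_id.
have -> : x = y by rewrite -e; apply: single; rewrite pxy e.
by rewrite e swap_l.
Qed.

(* Realize, inside p, the class pattern of an injective tuple through u and v
   by a tuple through x and y; then compatibility transports the swap of x, y
   to a swap of u, v. The blocks are large enough since |X_i| > K >= arities. *)
Lemma pullback_swap_srel p (x y : 'I_n) (R : lrel L) (w : 'I_(lar R) -> T) :
  Omega p -> automorphism (str_pb p) (swap x y) ->
  cls (emb p x) != cls (emb p y) ->
  srel M w -> srel M (swap (emb p x) (emb p y) \o w).
Proof.
move=> hp aut huv hw; set u := emb p x in huv *; set v := emb p y in huv *.
have [s [a [idx [a_inj wE hex hcnt]]]] := injective_factorization w [:: u; v].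
have [ju aju] := hex u (mem_head _ _).
have [jv ajv] := hex v (mem_last u [:: v]).
have cu : cls u = p x := emb_cls x hp.
have cv : cls v = p y := emb_cls y hp.
have juv : ju != jv by apply: contraNneq huv => e; rewrite -aju -ajv e eqxx.
have xy : x != y by apply: contraNneq huv => e; rewrite cu cv e eqxx.
pose b0 j := if j == ju then x else y.
have b0u : b0 ju = x by rewrite /b0 eqxx.
have b0v : b0 jv = y by rewrite /b0 eq_sym (negPf juv).
have small (i : 'I_k) : t <= i -> #|[set j | cls (a j) == i]| <= K.+1.
  move=> _; apply: leq_trans (hcnt (fun z => cls z == i)) _; rewrite -add1n leq_add //.
    by rewrite /= addn0; case: eqP => [<-|_]; case: eqP => // e; rewrite e eqxx in huv.
  by apply: leq_trans (max_card _) _; rewrite card_ord lar_le_K.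
have [j1 j2|j|b [b_inj pb bb0]] :=
  realize_pattern (J := [set ju; jv]) (b0 := b0) hp a_inj small.
- rewrite !inE => /orP [] /eqP -> /orP [] /eqP ->; rewrite ?b0u ?b0v // => e;
    by move: xy; rewrite e eqxx.
- by rewrite !inE => /orP [] /eqP ->; rewrite ?b0u ?b0v ?aju ?ajv.
have bju : b ju = x by rewrite bb0 ?b0u // !inE eqxx.
have bjv : b jv = y by rewrite bb0 ?b0v // !inE eqxx orbT.
have pat j : p (swap x y (b j)) = cls (swap u v (a j)).
  case: (eqVneq j ju) => [->|nju]; first by rewrite bju aju !swap_l.
  case: (eqVneq j jv) => [->|njv]; first by rewrite bjv ajv !swap_r.
  have nbx : b j <> x by rewrite -bju => /b_inj /eqP; rewrite (negPf nju).
  have nby : b j <> y by rewrite -bjv => /b_inj /eqP; rewrite (negPf njv).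
  have nau : a j <> u by rewrite -aju => /a_inj /eqP; rewrite (negPf nju).
  have nav : a j <> v by rewrite -ajv => /a_inj /eqP; rewrite (negPf njv).
  by rewrite !swap_id.
rewrite (_ : w = a \o idx) in hw *; last exact: funext wE.
change (holds M (swap u v \o a) (rel_atom idx)).
have bs_inj : injective (swap x y \o b) by move=> j1 j2 /swap_inj /b_inj.
have as_inj : injective (swap u v \o a) by move=> j1 j2 /swap_inj /a_inj.
apply/(pullback_holds_pattern (rel_atom idx) hp bs_inj as_inj pat).
apply/(iso_holds b _ aut).
exact/(pullback_holds_pattern (rel_atom idx) hp b_inj a_inj pb).
Qed.

Lemma pullback_swap_cls p (x y : 'I_n) : Omega p ->
  automorphism (str_pb p) (swap x y) -> p x = p y.
Proof.
move=> hp aut; rewrite -(emb_cls x hp) -(emb_cls y hp).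
case: (eqVneq (cls (emb p x)) (cls (emb p y))) => // huv.
have xy : x != y by apply: contraNneq huv => ->.
apply/cls_eq_sim => f fu fv fo.
have -> : f = swap (emb p x) (emb p y).
  apply: funext => z; case: (eqVneq z (emb p x)) => [->|/eqP zu].
    by rewrite fu swap_l.
  case: (eqVneq z (emb p y)) => [->|/eqP zv]; first by rewrite fv swap_r.
  by rewrite fo // swap_id.
apply: swap_automorphism => [R w|c]; first exact: pullback_swap_srel.
have [_ [_ /(_ c)]] := aut; rewrite pullback_cst => hc.
case: (eqVneq (scst M c) (emb p x)) => [e|/eqP cx].
  have ex : pb_cst p c = x by apply: (emb_inj hp); rewrite emb_pb_cst.
  by move: hc; rewrite ex swap_l => eyx; rewrite eyx eqxx in xy.
case: (eqVneq (scst M c) (emb p y)) => [e|/eqP cy]; last by rewrite swap_id.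
have ey : pb_cst p c = y by apply: (emb_inj hp); rewrite emb_pb_cst.
by move: hc; rewrite ey swap_r => exy; rewrite exy eqxx in xy.
Qed.

Lemma pullback_same_blocks p q x y : Omega p -> Omega q ->
  pullback p = pullback q -> (p x == p y) = (q x == q y).
Proof.
move=> hp hq epq; apply/eqP/eqP => h.
  by apply: (pullback_swap_cls hq); rewrite -epq; apply: pullback_swap.
by apply: (pullback_swap_cls hp); rewrite epq; apply: pullback_swap.
Qed.

Lemma relabel_respects_classes p q (sg : {perm 'I_k}) :
  Omega p -> Omega q -> (forall x, q x = sg (p x)) ->
  (forall i, (sg i < t) = (i < t)) /\ (forall i : 'I_k, i < t -> sz (sg i) = sz i).
Proof.
move=> hp hq hpq.
have blk i : #|[set x | q x == sg i]| = #|[set x | p x == i]|.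
  by apply: eq_card => x; rewrite !inE hpq (inj_eq perm_inj).
have fin i : (sg i < t) = (i < t).
  case: (ltnP i t) => hi; case: (ltnP (sg i) t) => // hs.
    by have := card_block_inf hq hs; rewrite blk card_block_fin // ltnNge sz_le_K.
  by have := card_block_inf hp hi; rewrite -blk card_block_fin // ltnNge sz_le_K.
split=> // i hi; have hs : sg i < t by rewrite fin.
by rewrite -(card_block_fin hq hs) blk card_block_fin.
Qed.

(* Relations are tested on injective tuples, realized inside p; p and q give
   the same pullback and q = sg o p, so F, which lifts sg, preserves them. *)
Lemma lift_automorphism p q (sg : {perm 'I_k}) F : Omega p -> Omega q ->
  pullback p = pullback q -> (forall x, q x = sg (p x)) ->
  bijective F -> (forall z, cls (F z) = sg (cls z)) -> automorphism M F.
Proof.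
move=> hp hq epq hpq Fbij FP; split=> //; split=> [R w|c].
  have [s [a [idx [a_inj wE _ hcnt]]]] := injective_factorization w [::].
  have small (i : 'I_k) : t <= i -> #|[set j | cls (a j) == i]| <= K.+1.
    move=> _; apply: leq_trans (hcnt (fun z => cls z == i)) _.
    by rewrite add0n (leq_trans (max_card _)) // card_ord leqW // lar_le_K.
  have [||b [b_inj pb _]] :=
    realize_pattern (J := set0) (b0 := fun=> x0) hp a_inj small.
  - by move=> ?; rewrite inE.
  - by move=> ?; rewrite inE.
  rewrite (_ : w = a \o idx); last exact: funext wE.
  change (holds M a (rel_atom idx) <-> holds M (F \o a) (rel_atom idx)).
  rewrite -(pullback_holds_pattern (rel_atom idx) hp b_inj a_inj pb) epq.
  apply: pullback_holds_pattern => // [j1 j2 /(bij_inj Fbij) /a_inj //|j].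
  by rewrite hpq pb /= FP.
have ecst : pb_cst p c = pb_cst q c by rewrite -!pullback_cst epq.
have h1 : p (pb_cst p c) = cls (scst M c) by rewrite -(emb_cls _ hp) emb_pb_cst.
have h2 : q (pb_cst q c) = cls (scst M c) by rewrite -(emb_cls _ hq) emb_pb_cst.
by apply: cls_cst_eq; rewrite FP -{1}h1 -hpq ecst h2.
Qed.

Lemma pullback_eq_autstar p q : Omega p -> Omega q -> pullback p = pullback q ->
  exists2 sg : {perm 'I_k}, in_AutStar M cls sg & forall x, q x = sg (p x).
Proof.
move=> hp hq epq.
have [sg hpq] := relabel_perm (fun i => block_nonempty i hp)
                              (fun x y => pullback_same_blocks x y hp hq epq).
have [sg_fin sg_sz] := relabel_respects_classes hp hq hpq.
have [F [Fbij FP]] := perm_lift sg_fin sg_sz.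
by exists sg => //; apply: autstar_of_lift (lift_automorphism hp hq epq hpq Fbij FP) FP.
Qed.

Lemma autstar_relabel_Omega sg p : in_AutStar M cls sg -> Omega p ->
  Omega [ffun x => sg (p x)].
Proof.
move=> hsg hp; apply/forallP => i; rewrite -[i](permKV sg); set j := (sg^-1)%g i.
have -> : #|[set x | [ffun x => sg (p x)] x == sg j]| = #|[set x | p x == j]|.
  by apply: eq_card => x; rewrite !inE ffunE (inj_eq perm_inj).
rewrite (autstar_finite _ hsg); have := forallP hp j.
by case: ltnP => // hj; rewrite autstar_sz.
Qed.

Lemma pullback_relabel sg p : in_AutStar M cls sg -> Omega p ->
  pullback [ffun x => sg (p x)] = pullback p.
Proof.
move=> hsg hp; symmetry; apply: compatible_pullback => [|s phi b a b_inj a_inj hba].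
  exact: autstar_relabel_Omega.
have [f [faut hf]] := hsg.
rewrite pullback_holds // -(iso_holds _ phi faut); apply: holds_cls_pattern => //.
  by move=> x y /(bij_inj faut.1) /(emb_inj hp) /b_inj.
by move=> j; rewrite /= ((hf _).1 _ (emb_cls _ hp)) -hba ffunE.
Qed.

Lemma relabel_inj p : Omega p ->
  injective (fun sg : {perm 'I_k} => [ffun x => sg (p x)]).
Proof.
move=> hp s1 s2 /ffunP e; apply/permP => i; have [x <-] := block_nonempty i hp.
by have := e x; rewrite !ffunE.
Qed.

Variable H : Lclass L.
Hypothesis hH : hereditary H.
Hypothesis hM : H M.

(* The pullback is isomorphic to the substructure of M on the image of emb p. *)
Lemma pullback_in_H p : Omega p -> H (str_pb p).
Proof.
move=> hp; have [hiso hsub] := hH.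
pose S z := exists x, emb p x = z.
have hS c : S (scst M c) by exists (pb_cst p c); rewrite emb_pb_cst.
have HS := hsub _ M S hS (ex_intro _ _ (ex_intro _ x0 erefl)) hM.
pose g (z : {z | S z}) := proj1_sig (cid (proj2_sig z)).
have gK z : emb p (g z) = proj1_sig z by rewrite /g; case: cid.
apply: (hiso _ _ _ _ g _ HS); split; [|split].
- exists (fun x => exist S (emb p x) (ex_intro _ x erefl)) => [[z hz]|x].
    by apply: eq_exist; exact: gK.
  by apply: (emb_inj hp); rewrite gK.
- move=> R w; rewrite pullback_srel.
  by under [X in _ <-> srel M X]funext => j do rewrite /= gK; exact: iff_refl.
- by move=> c; rewrite pullback_cst; apply: (emb_inj hp); rewrite gK emb_pb_cst.
Qed.

Definition compatible_set : {set fstr L n} :=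
  [set N | `[< H (fstr_str N) /\ compatible M t cls sz (fstr_str N) >] ].

(* Group the elements of Omega by their pullback: each fibre is an orbit of
   the free action of Aut^*(M) by relabelling. *)
Lemma card_Omega :
  #|[set p : {ffun 'I_n -> 'I_k} | Omega p]| =
  #|compatible_set| * #|autstar_set|.
Proof.
have in_C p : p \in [set p | Omega p] -> pullback p \in compatible_set.
  rewrite !inE => hp; apply/asboolP.
  by split; [exact: pullback_in_H | exact: pullback_compatible].
rewrite -sum1_card (partition_big _ (fun N => N \in compatible_set) in_C).
rewrite -sum_nat_const.
apply: eq_bigr => N; rewrite inE => /asboolP [_ [p0 [hp0 hN]]].
rewrite (compatible_pullback hp0 hN) sum1_card.
pose relabel (sg : {perm 'I_k}) := [ffun x => sg (p0 x)].
rewrite -(card_in_imset (f := relabel)); last by move=> ? ? _ _; apply: relabel_inj.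
apply: eq_card => p; apply/idP/imsetP => [/andP [hp /eqP epq]|[sg]].
  rewrite inE in hp.
  have [sg hsg hpq] := pullback_eq_autstar hp0 hp (esym epq).
  by exists sg; [rewrite inE; apply/asboolP | apply/ffunP => x; rewrite ffunE].
rewrite inE => /asboolP hsg ->; apply/andP.
by split; [rewrite inE; exact: autstar_relabel_Omega | rewrite pullback_relabel].
Qed.

End Classes.

Unset Implicit Arguments.
Import GRing.Theory Num.Theory.

Theorem mainTheorem5 (L : lang) (H : Lclass L)
  (hH : hereditary H) (hnt : nontrivial H) (hb : basic H)
  (T : Type) (M : str L T) (hM : H T M) (hcount : countably_infinite T)
  (k t : nat) (cls : T -> 'I_k) (sz : nat -> nat)
  (henum : class_enum M t cls sz) :
  exists n0 : nat, forall n : nat, (n0 <= n)%N ->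
    exists cnt aut : nat,
      Pcard (fun N : fstr L n => H _ (fstr_str N) /\
                                 compatible M t cls sz (fstr_str N)) cnt /\
      Pcard (fun sigma : {perm 'I_k} => in_AutStar M cls sigma) aut /\
      ((cnt%:R : rat) =
        (#|[set p : {ffun 'I_n -> 'I_k} | in_Omega L t sz p]|%:R : rat)
        / (aut%:R : rat))%R.
Proof.
exists 1 => n n_gt0.
pose C := compatible_set M t cls sz n H.
exists #|C|, #|autstar_set M cls|; split; [|split].
- by exists C; split=> // N; rewrite inE; split=> /asboolP.
- by exists (autstar_set M cls); split=> // sg; rewrite inE; split=> /asboolP.
rewrite (card_Omega henum hcount n_gt0 hH hM) natrM mulfK //.
by rewrite pnatr_eq0 -lt0n autstar_set_gt0.
Qed.
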